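(* Let $T$ be a complete theory with monster model $\mathfrak{C}$. Suppose there are a formula $\phi(x,y)$ and a strongly indiscernible tree $(a_\eta)_{\eta\in 2^{<\omega}}$ in $\mathfrak{C}$ such that the set $\{\phi(x,a_{0^n}):n<\omega\}$ has infinitely many realizations in $\mathfrak{C}$, while the formula $\phi(x,a_{\langle 0\rangle})\wedge\phi(x,a_{\langle 1\rangle})$ has only finitely many realizations in $\mathfrak{C}$. Then $T$ has SOP$_2$.
   Context: Here $0^n\in 2^{<\omega}$ denotes the sequence of $n$ zeros, and $\langle 0\rangle,\langle 1\rangle$ are the sequences of length one. Let $\mathcal{L}_0=\{\triangleleft,<_{lex},\wedge\}$ and view $2^{<\omega}$ as an $\mathcal{L}_0$-structure with $\triangleleft$ the prefix (initial segment) order, $<_{lex}$ the lexicographic order, and $\wedge$ the meet (longest common initial segment). A tree $(a_\eta)_{\eta\in S}$ is strongly indiscernible (over $C$) if whenever $\mathrm{qftp}_{\mathcal{L}_0}(\eta_0,\dots,\eta_{n-1})=\mathrm{qftp}_{\mathcal{L}_0}(\nu_0,\dots,\nu_{n-1})$ we have $\mathrm{tp}(a_{\eta_0},\dots,a_{\eta_{n-1}}/C)=\mathrm{tp}(a_{\nu_0},\dots,a_{\nu_{n-1}}/C)$. A formula $\phi(x;y)$ has SOP$_2$ if there are tuples $(b_\eta)_{\eta\in 2^{<\omega}}$ such that for every $\xi\in 2^\omega$ the set $\{\phi(x,b_{\xi|n}):n<\omega\}$ is consistent, and for every pair of $\triangleleft$-incomparable $\eta,\nu$ the formula $\phi(x,b_\eta)\wedge\phi(x,b_\nu)$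 is inconsistent; $T$ has SOP$_2$ if some formula does. *)

From Stdlib Require List.
From mathcomp Require Import all_boot.

Set Implicit Arguments.
Unset Strict Implicit.
Unset Printing Implicit Defensive.

Record signature := Signature {
  Fsym : Type;
  Rsym : Type;
  far : Fsym -> nat;
  rar : Rsym -> nat }.

Record structure (L : signature) := Structure {
  dom :> Type;
  fint : forall f : Fsym L, ('I_(far f) -> dom) -> dom;
  rint : forall r : Rsym L, ('I_(rar r) -> dom) -> Prop }.

Inductive term (L : signature) : Type :=
  | tvar : nat -> term L
  | tapp : forall f : Fsym L, ('I_(far f) -> term L) -> term L.

Inductive formula (L : signature) : Type :=
  | fequ : term L -> term L -> formula L
  | frel : forall r : Rsym L, ('I_(rar r) -> term L) -> formula L
  | fneg : formula L -> formula L
  | fand : formula L -> formula L -> formula L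
  | fex  : nat -> formula L -> formula L.

Arguments tvar {L}.
Arguments tapp {L}.

Fixpoint teval (L : signature) (M : structure L) (e : nat -> M) (t : term L) : M :=
  match t with
  | tvar v => e v
  | tapp f args => @fint L M f (fun i => teval e (args i))
  end.

Fixpoint tfv (L : signature) (t : term L) (v : nat) : Prop :=
  match t with
  | tvar w => w = v
  | tapp f args => exists i, tfv (args i) v
  end.

Definition upd (M : Type) (e : nat -> M) (v : nat) (a : M) : nat -> M :=
  fun w => if w == v then a else e w.

Fixpoint sat (L : signature) (M : structure L) (e : nat -> M) (phi : formula L) : Prop :=
  match phi with
  | fequ t1 t2 => teval e t1 = teval e t2
  | frel r args => @rint L M r (fun i => teval e (args i))
  | fneg p => ~ sat e p
  | fand p q => sat e p /\ sat e q
  | fex v p => exists a : M, sat (upd e v a) p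
  end.

Fixpoint ffv (L : signature) (phi : formula L) (v : nat) : Prop :=
  match phi with
  | fequ t1 t2 => tfv t1 v \/ tfv t2 v
  | frel r args => exists i, tfv (args i) v
  | fneg p => ffv p v
  | fand p q => ffv p v \/ ffv q v
  | fex w p => w <> v /\ ffv p v
  end.

Definition fv_bound (L : signature) (phi : formula L) (N : nat) : Prop :=
  forall v, ffv phi v -> v < N.

(* environment for a formula psi(x; c): variables 0..p-1 are the tuple x,
   variable p+i is c i *)
Definition penv (M : Type) (p : nat) (x c : nat -> M) : nat -> M :=
  fun v => if v < p then x v else c (v - p).

(* aleph_1-saturation: every countable set of formulas in finitely many
   variables x_0..x_{p-1} over countably many parameters, finitely
   satisfiable in M, is realized in M. *)
Definition aleph1_saturated (L : signature) (M : structure L) : Prop :=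
  forall (p : nat) (ps : nat -> formula L) (c : nat -> M),
    (forall N, exists x : nat -> M, forall i, i < N -> sat (penv p x c) (ps i)) ->
    exists x : nat -> M, forall i, sat (penv p x c) (ps i).

(* "the set of n-tuples satisfying P is finite": a finite list covers them
   (tuples are compared on their first n coordinates). *)
Definition finitely_many (M : Type) (n : nat) (P : (nat -> M) -> Prop) : Prop :=
  exists l : list (nat -> M),
    forall x, P x -> exists x', List.In x' l /\ forall i, i < n -> x i = x' i.

Definition tle (eta nu : seq bool) : bool := take (size eta) nu == eta.

Fixpoint tmeet (eta nu : seq bool) : seq bool :=
  match eta, nu with
  | a :: eta', b :: nu' => if a == b then a :: tmeet eta' nu' else [::]
  | _, _ => [::]
  end.

Definition tlex (eta nu : seq bool) : bool :=
  (tle eta nu && (eta != nu))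
  || (tle (rcons (tmeet eta nu) false) eta && tle (rcons (tmeet eta nu) true) nu).

Inductive l0term : Type :=
  | l0var : nat -> l0term
  | l0meet : l0term -> l0term -> l0term.

Fixpoint l0eval (etas : seq (seq bool)) (t : l0term) : seq bool :=
  match t with
  | l0var i => nth [::] etas i
  | l0meet t1 t2 => tmeet (l0eval etas t1) (l0eval etas t2)
  end.

Fixpoint l0bound (t : l0term) (k : nat) : bool :=
  match t with
  | l0var i => i < k
  | l0meet t1 t2 => l0bound t1 k && l0bound t2 k
  end.

(* qftp_{L0}(etas) = qftp_{L0}(nus): same length and the same atomic
   L0-formulas (=, prefix, <lex between L0-terms) hold. *)
Definition qftp_eq (etas nus : seq (seq bool)) : Prop :=
  size etas = size nus /\
  forall t1 t2, l0bound t1 (size etas) -> l0bound t2 (size etas) ->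
    [/\ (l0eval etas t1 == l0eval etas t2) = (l0eval nus t1 == l0eval nus t2),
        tle (l0eval etas t1) (l0eval etas t2) = tle (l0eval nus t1) (l0eval nus t2)
      & tlex (l0eval etas t1) (l0eval etas t2) = tlex (l0eval nus t1) (l0eval nus t2)].

(* environment listing a_{eta_0}, ..., a_{eta_{k-1}} (each an m-tuple):
   variable j*m + i is the i-th coordinate of a_{eta_j} *)
Definition tenv (M : Type) (m : nat) (a : seq bool -> nat -> M)
  (etas : seq (seq bool)) : nat -> M :=
  fun v => a (nth [::] etas (v %/ m)) (v %% m).

Definition strongly_indiscernible (L : signature) (M : structure L) (m : nat)
  (a : seq bool -> nat -> M) : Prop :=
  forall etas nus : seq (seq bool), qftp_eq etas nus ->
    forall psi : formula L, fv_bound psi (size etas * m) ->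
      (sat (tenv m a etas) psi <-> sat (tenv m a nus) psi).

Definition restr (xi : nat -> bool) (k : nat) : seq bool := mkseq xi k.

(* phi(x;y), |x| = n, |y| = m, has SOP2 (in M): consistency = finite
   satisfiability in M *)
Definition has_SOP2_formula (L : signature) (M : structure L) (n m : nat)
  (phi : formula L) : Prop :=
  exists b : seq bool -> nat -> M,
    (forall (xi : nat -> bool) (N : nat),
        exists x : nat -> M, forall k, k <= N -> sat (penv n x (b (restr xi k))) phi)
    /\ (forall eta nu : seq bool, ~~ tle eta nu -> ~~ tle nu eta ->
        ~ exists x : nat -> M, sat (penv n x (b eta)) phi /\ sat (penv n x (b nu)) phi).

Definition has_SOP2 (L : signature) (M : structure L) : Prop :=
  exists (n m : nat) (phi : formula L), fv_bound phi (n + m) /\ has_SOP2_formula M n m phi.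

From mathcomp Require Import all_boot zify.
From Stdlib Require Import FunctionalExtensionality Classical.

(* Let [l] list the finitely many common solutions of [phi(x; a_<0>)] and [phi(x; a_<1>)],
   and [K = |l| + 1]. The formula [chi(X; y)], saying that [X] consists of [K] pairwise distinct
   solutions of [phi(-; y)], has SOP2 along the tree [a] itself:
   - [K] distinct realizations of the leftmost branch realize [chi] along it, and a chain of
     any branch has the same quantifier-free type as the chain of the same length on the
     leftmost one, so strong indiscernibility makes [chi] consistent along every branch;
   - [chi(X; a_<0>) /\ chi(X; a_<1>)] would yield [K] distinct common solutions, which the
     pigeonhole principle forbids, and every incomparable pair [eta, nu] has, up to order,
     the quantifier-free type of [<0>, <1>].
   Consistency in [has_SOP2] is finite satisfiability in [M]. *)

Set Implicit Arguments.
Unset Strict Implicit.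
Unset Printing Implicit Defensive.

Section Semantics.
Variables (L : signature) (M : structure L).

Lemma eq_teval (t : term L) (e1 e2 : nat -> M) :
  (forall v, tfv t v -> e1 v = e2 v) -> teval e1 t = teval e2 t.
Proof.
elim: t => [v|f args IH] He /=; first exact: He.
congr (fint _); apply: functional_extensionality => i.
by apply: IH => v Hv; apply: He; exists i.
Qed.

Lemma eq_sat (p : formula L) (e1 e2 : nat -> M) :
  (forall v, ffv p v -> e1 v = e2 v) -> (sat e1 p <-> sat e2 p).
Proof.
elim: p e1 e2 => [t1 t2|r args|p IH|p IHp q IHq|w p IH] e1 e2 He /=.
- by rewrite (@eq_teval t1 e1 e2) ?(@eq_teval t2 e1 e2) // => v Hv; apply: He; [right|left].
- have -> // : (fun i => teval e1 (args i)) = (fun i => teval e2 (args i)).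
  apply: functional_extensionality => i; apply: eq_teval => v Hv; apply: He; by exists i.
- by rewrite (IH e1 e2 He).
- by rewrite (IHp e1 e2) ?(IHq e1 e2) // => v Hv; apply: He; [right|left].
- have Hupd x : sat (upd e1 w x) p <-> sat (upd e2 w x) p.
    apply: IH => v Hv; rewrite /upd; case: eqP => // Hne.
    by apply: He; split => // Hw; apply: Hne.
  by split=> -[x Hx]; exists x; apply/Hupd.
Qed.

Lemma eq_sat_imp (p : formula L) (e1 e2 : nat -> M) :
  (forall v, ffv p v -> e1 v = e2 v) -> sat e1 p -> sat e2 p.
Proof. by move=> He /(eq_sat He). Qed.

Definition ftrue : formula L := fneg (fex 0 (fneg (fequ (tvar 0) (tvar 0)))).

Lemma sat_ftrue (e : nat -> M) : sat e ftrue.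
Proof. by move=> /= [x]; apply. Qed.

Lemma ffv_ftrue v : ~ ffv ftrue v.
Proof. by move=> /= [Hv [|]]. Qed.

Fixpoint fbigand (F : nat -> formula L) (k : nat) : formula L :=
  if k is k'.+1 then fand (fbigand F k') (F k') else ftrue.

Lemma sat_fbigand (e : nat -> M) F k :
  sat e (fbigand F k) <-> forall i, i < k -> sat e (F i).
Proof.
elim: k => [|k IH] /=; first by split => // _; exact: sat_ftrue.
rewrite IH; split=> [[HF HFk] i|HF]; last by split => [i Hi|]; apply: HF; lia.
by rewrite ltnS leq_eqVlt => /orP [/eqP ->|/HF].
Qed.

Lemma ffv_fbigand F k v : ffv (fbigand F k) v -> exists2 i, i < k & ffv (F i) v.
Proof.
elim: k => [|k IH] /=; first by move/ffv_ftrue.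
by move=> [/IH [i Hi Hv]|Hv]; [exists i => //; lia | exists k].
Qed.

Fixpoint fexblock (lo len : nat) (p : formula L) : formula L :=
  if len is len'.+1 then fex lo (fexblock lo.+1 len' p) else p.

Lemma sat_fexblock len lo (e : nat -> M) p :
  sat e (fexblock lo len p) <->
  exists f : nat -> M, sat (fun v => if (lo <= v) && (v < lo + len) then f v else e v) p.
Proof.
elim: len lo e => [|len IH] lo e /=.
  have Ee f : (fun v => if (lo <= v) && (v < lo + 0) then f v else e v) = e.
    by apply: functional_extensionality => v; case: ifP => //; lia.
  by split=> [He|[f]]; [exists e | ]; rewrite Ee.
have Eenv (f : nat -> M) x :
    (fun v => if (lo.+1 <= v) && (v < lo.+1 + len) then f v else upd e lo x v) =
    (fun v => if (lo <= v) && (v < lo + len.+1) then upd f lo x v else e v).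
  apply: functional_extensionality => v; rewrite /upd.
  by case: (ltngtP v lo) => Hv; repeat case: ifP => ?; try lia; subst; rewrite ?eqxx.
split=> [[x /IH [f]]|[f Hf]]; first by rewrite Eenv; exists (upd f lo x).
exists (f lo); apply/IH; exists f; rewrite Eenv.
have -> // : upd f lo (f lo) = f.
by apply: functional_extensionality => v; rewrite /upd; case: eqP => [->|].
Qed.

Lemma ffv_fexblock len lo p v :
  ffv (fexblock lo len p) v -> ~~ ((lo <= v) && (v < lo + len)) /\ ffv p v.
Proof.
elim: len lo => [|len IH] lo /=; first by move=> Hv; split => //; lia.
by move=> [Hne /IH [Hout Hv]]; split => //; lia.
Qed.

Definition feqs (F G : nat -> nat) (k : nat) : formula L :=
  fbigand (fun j => fequ (tvar (F j)) (tvar (G j))) k.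

Lemma sat_feqs (e : nat -> M) F G k :
  sat e (feqs F G k) <-> forall j, j < k -> e (F j) = e (G j).
Proof. exact: sat_fbigand. Qed.

Lemma ffv_feqs F G k v : ffv (feqs F G k) v -> exists2 j, j < k & (F j = v \/ G j = v).
Proof. by move/ffv_fbigand => [j Hj /= Hv]; exists j. Qed.

(* Simultaneous substitution of [sg j] for the variables [j < N], routed through the fresh
   variables [h, h + N) so that no variable is captured. *)
Definition frename (sg : nat -> nat) (N h : nat) (p : formula L) : formula L :=
  fexblock h N (fand (feqs (fun j => h + j) sg N)
                     (fexblock 0 N (fand (feqs id (fun j => h + j) N) p))).

Lemma sat_frename (e : nat -> M) sg N h p :
  fv_bound p N -> N <= h -> (forall j, j < N -> sg j < h) ->
  (sat e (frename sg N h p) <-> sat (fun j => e (sg j)) p).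
Proof.
move=> Hp HN Hsg; rewrite /frename sat_fexblock; split.
- move=> [f /= [/sat_feqs Hf /sat_fexblock [g /= [/sat_feqs Hg]]]].
  apply: eq_sat_imp => v /Hp Hv /=.
  move: (Hg v Hv) (Hf v Hv) (Hsg v Hv); repeat case: ifP => ?; try lia; congruence.
- move=> Hs; exists (fun v => e (sg (v - h))) => /=; split.
    apply/sat_feqs => j Hj; rewrite addKn.
    by move: (Hsg j Hj); repeat case: ifP => ?; try lia.
  apply/sat_fexblock; exists (fun v => e (sg v)) => /=; split.
    apply/sat_feqs => j Hj; rewrite addKn.
    by move: (Hsg j Hj); repeat case: ifP => ?; try lia.
  move: Hs; apply: eq_sat_imp => v /Hp Hv /=.
  by move: (Hsg v Hv); repeat case: ifP => ?; try lia.
Qed.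

Lemma ffv_frename sg N h p v : fv_bound p N -> N <= h ->
  ffv (frename sg N h p) v -> exists2 j, j < N & v = sg j.
Proof.
move=> Hp HN /ffv_fexblock [Hout [/ffv_feqs [j Hj [E|E]]|]]; first lia; first by exists j.
move=> /ffv_fexblock [Hout' [/ffv_feqs [j Hj [E|E]]|/Hp]] /=; lia.
Qed.

End Semantics.

Arguments feqs {L}.

Lemma tle_nil t : tle [::] t. Proof. by rewrite /tle take0. Qed.
Lemma tle_cons b c s t : tle (b :: s) (c :: t) = (c == b) && tle s t.
Proof. by rewrite /tle /= eqseq_cons. Qed.
Lemma tle_catl mu s t : tle (mu ++ s) (mu ++ t) = tle s t.
Proof. by elim: mu => [|b mu IH] //=; rewrite tle_cons eqxx. Qed.
Lemma tle_refl s : tle s s. Proof. by rewrite /tle take_size. Qed.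
Lemma tle_cat s r : tle s (s ++ r). Proof. by rewrite /tle take_size_cat. Qed.
Lemma tle_size s t : tle s t -> size s <= size t.
Proof. by rewrite /tle => /eqP <-; rewrite size_take; case: ltnP => // /ltnW. Qed.
Lemma tle_rcons s b : tle (rcons s b) s = false.
Proof. by apply/negbTE/negP => /tle_size; rewrite size_rcons ltnn. Qed.

Lemma tmeet_id s : tmeet s s = s.
Proof. by elim: s => [|b s IH] //=; rewrite eqxx IH. Qed.
Lemma tmeet_catl mu s t : tmeet (mu ++ s) (mu ++ t) = mu ++ tmeet s t.
Proof. by elim: mu => [|b mu IH] //=; rewrite eqxx IH. Qed.
Lemma tmeet_cat_idl s r : tmeet s (s ++ r) = s.
Proof. by elim: s => [|b s IH] //=; rewrite eqxx IH. Qed.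
Lemma tmeet_cat_idr s r : tmeet (s ++ r) s = s.
Proof. by elim: s => [|b s IH] /=; [case: r | rewrite eqxx IH]. Qed.

Lemma tlex_catl mu s t : tlex (mu ++ s) (mu ++ t) = tlex s t.
Proof. by rewrite /tlex tmeet_catl !rcons_cat !tle_catl eqseq_cat // eqxx. Qed.

Lemma restr_cat xi i j : i <= j -> exists r, restr xi j = restr xi i ++ r.
Proof.
move=> Hij; exists (map xi (iota i (j - i))).
by rewrite /restr /mkseq -map_cat -iotaD subnKC.
Qed.

Lemma restr_false k : restr (fun=> false) k = nseq k false.
Proof.
apply: (@eq_from_nth _ false); rewrite ?size_mkseq ?size_nseq // => i Hi.
by rewrite nth_mkseq // nth_nseq Hi.
Qed.

Lemma tmeet_restr xi i j : tmeet (restr xi i) (restr xi j) = restr xi (minn i j).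
Proof.
case: (leqP i j) => Hij.
  by have [r ->] := restr_cat xi Hij; rewrite tmeet_cat_idl.
by have [r ->] := restr_cat xi (ltnW Hij); rewrite tmeet_cat_idr.
Qed.

Lemma restr_inj xi i j : (restr xi i == restr xi j) = (i == j).
Proof. by apply/eqP/eqP => [/(congr1 size)|->//]; rewrite !size_mkseq. Qed.

Lemma tle_restr xi i j : tle (restr xi i) (restr xi j) = (i <= j).
Proof.
case: (leqP i j) => Hij; first by have [r ->] := restr_cat xi Hij; exact: tle_cat.
by apply/negbTE/negP => /tle_size; rewrite !size_mkseq leqNgt Hij.
Qed.

Lemma tlex_restr xi i j : tlex (restr xi i) (restr xi j) = (i < j).
Proof.
rewrite /tlex tle_restr restr_inj tmeet_restr.
have -> : tle (rcons (restr xi (minn i j)) false) (restr xi i) &&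
          tle (rcons (restr xi (minn i j)) true) (restr xi j) = false.
  apply/negbTE/negP => /andP [/tle_size + /tle_size].
  by rewrite !size_rcons !size_mkseq; lia.
by rewrite orbF; case: ltngtP.
Qed.

Fixpoint term_min (t : l0term) : nat :=
  if t is l0meet t1 t2 then minn (term_min t1) (term_min t2) else
  if t is l0var i then i else 0.

Lemma l0eval_branch xi k t :
  l0bound t k -> l0eval (mkseq (restr xi) k) t = restr xi (term_min t).
Proof.
elim: t => [i|t1 IH1 t2 IH2] /=; first by move=> Hi; rewrite nth_mkseq.
by move/andP => [H1 H2]; rewrite IH1 // IH2 // tmeet_restr.
Qed.

Lemma qftp_branch xi xi' k : qftp_eq (mkseq (restr xi) k) (mkseq (restr xi') k).
Proof.
split; first by rewrite !size_mkseq.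
rewrite size_mkseq => t1 t2 H1 H2.
by rewrite !l0eval_branch // !restr_inj !tle_restr !tlex_restr.
Qed.

Lemma l0eval_catl mu etas t : l0bound t (size etas) ->
  l0eval (map (cat mu) etas) t = mu ++ l0eval etas t.
Proof.
elim: t => [i|t1 IH1 t2 IH2] /=; first by move=> Hi; rewrite (nth_map [::]).
by move/andP => [H1 H2]; rewrite IH1 // IH2 // tmeet_catl.
Qed.

Lemma qftp_catl mu etas : qftp_eq (map (cat mu) etas) etas.
Proof.
split; first by rewrite size_map.
rewrite size_map => t1 t2 H1 H2.
by rewrite !l0eval_catl // eqseq_cat // eqxx tle_catl tlex_catl.
Qed.

(* The terms over the pair [0 :: e, 1 :: f] take only three values: index 0 and 1 for the
   two nodes, index 2 for their meet, the root. *)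
Definition pair_node (e f : seq bool) (i : nat) : seq bool :=
  if i == 0 then false :: e else if i == 1 then true :: f else [::].

Fixpoint pair_index (t : l0term) : nat :=
  if t is l0meet t1 t2 then
    (if pair_index t1 == pair_index t2 then pair_index t1 else 2)
  else if t is l0var i then i else 0.

Lemma l0eval_pair e f t : l0bound t 2 ->
  l0eval [:: false :: e; true :: f] t = pair_node e f (pair_index t) /\ pair_index t < 3.
Proof.
elim: t => [[|[|]]|t1 IH1 t2 IH2] //= /andP [/IH1 [-> H1] /IH2 [-> H2]].
by move: H1 H2; case: (pair_index t1) => [|[|[|]]]; case: (pair_index t2) => [|[|[|]]];
  rewrite //= ?tmeet_id.
Qed.

Lemma qftp_pair e f e' f' : qftp_eq [:: false :: e; true :: f] [:: false :: e'; true :: f'].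
Proof.
split => // t1 t2 H1 H2.
have [-> c1] := l0eval_pair e f H1; have [-> c2] := l0eval_pair e f H2.
have [-> _] := l0eval_pair e' f' H1; have [-> _] := l0eval_pair e' f' H2.
move: c1 c2; case: (pair_index t1) => [|[|[|]]] //; case: (pair_index t2) => [|[|[|]]] //= _ _;
  by rewrite /tlex ?tmeet_id ?eqxx ?tle_refl ?tle_nil ?tle_cons /= ?tle_rcons ?tle_nil.
Qed.

Lemma incomparable_split eta nu : ~~ tle eta nu -> ~~ tle nu eta ->
  exists mu e f, (eta = mu ++ false :: e /\ nu = mu ++ true :: f) \/
                 (nu = mu ++ false :: f /\ eta = mu ++ true :: e).
Proof.
elim: eta nu => [|b eta IH] [|c nu] //=; rewrite ?tle_nil // !tle_cons.
case: b; case: c => //= H1 H2.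
- have [mu [e [f Hsplit]]] := IH nu H1 H2; exists (true :: mu), e, f.
  by case: Hsplit => -[-> ->]; [left|right].
- by exists [::], eta, nu; right.
- by exists [::], eta, nu; left.
- have [mu [e [f Hsplit]]] := IH nu H1 H2; exists (false :: mu), e, f.
  by case: Hsplit => -[-> ->]; [left|right].
Qed.

Section Transfer.
Variables (L : signature) (M : structure L) (m : nat) (a : seq bool -> nat -> M).
Variables (p : nat) (psi : formula L).
Hypothesis Hpsi : fv_bound psi (p + m).

(* In [fcommon s] the variables [j * m, j * m + m) hold the parameter [y_j], for [j < s],
   and [fcommon s] says [exists X, psi(X; y_0) /\ ... /\ psi(X; y_(s-1))]. *)
Definition fcommon_var (s j l : nat) : nat := if l < p then s * m + l else j * m + (l - p).

Definition fcommon (s : nat) : formula L :=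
  fexblock (s * m) p
    (fbigand (fun j => frename (fcommon_var s j) (p + m) (s * m + p + (p + m)) psi) s).

Lemma fv_fcommon s : fv_bound (fcommon s) (s * m).
Proof.
move=> v /ffv_fexblock [Hout /ffv_fbigand [j Hj /ffv_frename]].
case=> //; first lia.
by move=> l Hl Ev; move: Hout; rewrite Ev /fcommon_var; case: ifP => ?; nia.
Qed.

Lemma sat_fcommon etas :
  sat (tenv m a etas) (fcommon (size etas)) <->
  exists X, forall j, j < size etas -> sat (penv p X (a (nth [::] etas j))) psi.
Proof.
set s := size etas.
have Einst f j : j < s ->
    (sat (fun v => if (s * m <= v) && (v < s * m + p) then f v else tenv m a etas v)
         (frename (fcommon_var s j) (p + m) (s * m + p + (p + m)) psi) <->
     sat (penv p (fun l => f (s * m + l)) (a (nth [::] etas j))) psi).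
  move=> Hj; rewrite sat_frename //; last 2 first.
  - lia.
  - by move=> l Hl; rewrite /fcommon_var; case: ifP => ?; nia.
  apply: eq_sat => v /Hpsi Hv; rewrite /penv /fcommon_var; case: (ltnP v p) => Hvp.
    by rewrite (_ : (s * m <= s * m + v) && (s * m + v < s * m + p)) //; lia.
  rewrite (_ : (s * m <= j * m + (v - p)) && _ = false); last nia.
  by rewrite /tenv divnMDl ?divn_small ?addn0 ?modnMDl ?modn_small //; lia.
rewrite /fcommon sat_fexblock; split=> [[f /sat_fbigand Hf]|[X HX]].
  by exists (fun l => f (s * m + l)) => j Hj; apply/Einst => //; apply: Hf.
exists (fun v => X (v - s * m)); apply/sat_fbigand => j Hj; apply/Einst => //.
by move: (HX j Hj); apply: eq_sat_imp => v _; rewrite /penv addKn.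
Qed.

Hypothesis Ha : strongly_indiscernible m a.

Lemma transfer_common etas nus : qftp_eq etas nus ->
  (exists X, forall j, j < size etas -> sat (penv p X (a (nth [::] etas j))) psi) ->
  exists X, forall j, j < size nus -> sat (penv p X (a (nth [::] nus j))) psi.
Proof.
move=> Hq /sat_fcommon Hs; have [Hsize _] := Hq.
by apply/sat_fcommon; rewrite -Hsize; apply/(Ha Hq (@fv_fcommon (size etas))).
Qed.

Lemma consistent_all_branches :
  (exists X, forall k, sat (penv p X (a (nseq k false))) psi) ->
  forall xi N, exists X, forall k, k <= N -> sat (penv p X (a (restr xi k))) psi.
Proof.
move=> [X HX] xi N.
have [Y HY] : exists Y, forall k, k < size (mkseq (restr xi) N.+1) ->
    sat (penv p Y (a (nth [::] (mkseq (restr xi) N.+1) k))) psi.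
  apply: transfer_common (qftp_branch (fun=> false) xi N.+1) _.
  by exists X => k; rewrite size_mkseq => Hk; rewrite nth_mkseq // restr_false.
exists Y => k Hk; move: (HY k); rewrite size_mkseq nth_mkseq //; exact.
Qed.

Lemma inconsistent_incomparable :
  ~ (exists X, sat (penv p X (a [:: false])) psi /\ sat (penv p X (a [:: true])) psi) ->
  forall eta nu, ~~ tle eta nu -> ~~ tle nu eta ->
  ~ exists X, sat (penv p X (a eta)) psi /\ sat (penv p X (a nu)) psi.
Proof.
move=> Hroot eta nu Hen Hne.
suff Hsplit : forall mu e f,
    ~ exists X, sat (penv p X (a (mu ++ false :: e))) psi /\
                sat (penv p X (a (mu ++ true :: f))) psi.
  have [mu [e [f [[-> ->]|[-> ->]]]]] := incomparable_split Hen Hne; first exact: Hsplit.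
  by move=> [X [H1 H2]]; apply: (Hsplit mu f e); exists X.
move=> mu e f [X [H1 H2]]; apply: Hroot.
have Hcat : exists X, forall j, j < size (map (cat mu) [:: false :: e; true :: f]) ->
    sat (penv p X (a (nth [::] (map (cat mu) [:: false :: e; true :: f]) j))) psi.
  by exists X => -[|[|]].
have [Y HY] := transfer_common (qftp_pair e f [::] [::]) (transfer_common (qftp_catl mu _) Hcat).
by exists Y; split; [apply: (HY 0) | apply: (HY 1)].
Qed.

End Transfer.

Definition agree (T : Type) (n : nat) (x y : nat -> T) : Prop := forall i, i < n -> x i = y i.

Lemma nth_In (T : Type) (s : seq T) x0 i : i < size s -> List.In (nth x0 s i) s.
Proof. by elim: s i => [|y s IH] [|i] //= Hi; [left | right; exact: IH]. Qed.

Lemma In_nth (T : Type) (s : seq T) x :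
  List.In x s -> exists2 i, i < size s & nth x s i = x.
Proof. by elim: s => [|y s IH] //= [->|/IH [i Hi Ei]]; [exists 0 | exists i.+1]. Qed.

Lemma not_finitely_many_distinct (T : Type) n (P : (nat -> T) -> Prop) :
  ~ finitely_many n P -> forall K, exists xs : nat -> nat -> T,
    (forall i, i < K -> P (xs i)) /\ (forall i j, i < K -> j < i -> ~ agree n (xs i) (xs j)).
Proof.
move=> Hinf; elim=> [|K [xs [HP Hdist]]].
  have [x _] : exists x, P x.
    by apply: NNPP => Hno; apply: Hinf; exists [::] => x Px; case: Hno; exists x.
  by exists (fun=> x).
have [[x [Px Hx]]|Hno] := classic (exists x, P x /\ forall i, i < K -> ~ agree n x (xs i)).
  exists (fun i => if i == K then x else xs i); split=> [i Hi|i j Hi Hj].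
    by case: eqP => [//|/eqP HiK]; apply: HP; lia.
  rewrite (_ : j == K = false); last lia.
  by case: eqP => [_|/eqP HiK]; [apply: Hx | apply: Hdist]; lia.
case: Hinf; exists (mkseq xs K) => x Px; apply: NNPP => Hout; apply: Hno; exists x.
split=> // i Hi Hag; apply: Hout; exists (xs i); split; last exact: Hag.
by rewrite -(nth_mkseq (xs 0) xs Hi); apply: nth_In; rewrite size_mkseq.
Qed.

Lemma pigeonhole_agree (T : Type) n (l : seq (nat -> T)) K (xs : nat -> nat -> T) :
  size l < K -> (forall i, i < K -> exists x, List.In x l /\ agree n (xs i) x) ->
  exists i j, [/\ i < K, j < i & agree n (xs i) (xs j)].
Proof.
move=> HK Hcover.
have Hidx (i : 'I_K) : exists j : 'I_(size l), agree n (xs i) (nth (xs 0) l j).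
  have [x [Hx Hag]] := Hcover i (ltn_ord i); have [j Hj Ej] := In_nth Hx.
  by exists (Ordinal Hj); rewrite /= (set_nth_default x) // Ej.
have [f Hf] := fin_all_exists Hidx.
apply: NNPP => Hno.
suff Hinj : injective f by have := leq_card f Hinj; rewrite !card_ord leqNgt HK.
move=> i i' Eii'; apply: val_inj; case: (ltngtP i i') => // Hii'; case: Hno.
- by exists i', i; split=> // k Hk; rewrite (Hf i' k Hk) -Eii' -(Hf i k Hk).
- by exists i, i'; split=> // k Hk; rewrite (Hf i k Hk) Eii' -(Hf i' k Hk).
Qed.

Definition block (T : Type) (n : nat) (X : nat -> T) (i : nat) : nat -> T :=
  fun l => X (i * n + l).

Section Distinct.
Variables (L : signature) (M : structure L) (n m K : nat) (phi : formula L).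
Hypothesis Hphi : fv_bound phi (n + m).

(* [chi(X; y)] with [X] a [K]-tuple of [n]-tuples: every [X_i] satisfies [phi(X_i; y)] and
   the [X_i] are pairwise distinct. *)
Definition chi_var (i l : nat) : nat := if l < n then i * n + l else K * n + (l - n).

Definition chi : formula L :=
  fand (fbigand (fun i => frename (chi_var i) (n + m) (K * n + m + (n + m)) phi) K)
       (fbigand (fun i => fbigand (fun j => fneg (feqs (fun l => i * n + l) (fun l => j * n + l) n))
                                  i) K).

Lemma fv_chi : fv_bound chi (K * n + m).
Proof.
move=> v /= [/ffv_fbigand [i Hi /ffv_frename]|/ffv_fbigand [i Hi /ffv_fbigand [j Hj /ffv_feqs]]].
- by case=> //; [lia | move=> l Hl ->; rewrite /chi_var; case: ifP => ?; nia].
- by case=> l Hl [<-|<-]; nia.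
Qed.

Lemma sat_chi (X c : nat -> M) :
  sat (penv (K * n) X c) chi <->
  (forall i, i < K -> sat (penv n (block n X i) c) phi) /\
  (forall i j, i < K -> j < i -> ~ agree n (block n X i) (block n X j)).
Proof.
have Ephi i : i < K ->
    sat (penv (K * n) X c) (frename (chi_var i) (n + m) (K * n + m + (n + m)) phi) <->
    sat (penv n (block n X i) c) phi.
  move=> Hi; rewrite sat_frename //; last 2 first.
  - lia.
  - by move=> j Hj; rewrite /chi_var; case: ifP => ?; nia.
  apply: eq_sat => v /Hphi Hv; rewrite /penv /block /chi_var; case: (ltnP v n) => Hvn.
    by rewrite (_ : i * n + v < K * n) //; nia.
  by rewrite (_ : K * n + (v - n) < K * n = false) ?addKn //; lia.
have Edist i j : i < K -> j < i ->
    sat (penv (K * n) X c) (fneg (feqs (fun l => i * n + l) (fun l => j * n + l) n)) <->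
    ~ agree n (block n X i) (block n X j).
  move=> Hi Hj; rewrite /= sat_feqs /agree /penv /block.
  by split=> Hne Hag; apply: Hne => l Hl; move: (Hag l Hl); repeat case: ifP => ?; try nia.
rewrite /= !sat_fbigand; split=> -[Hsat Hdist]; split.
- by move=> i Hi; apply/Ephi => //; apply: Hsat.
- by move=> i j Hi Hj; apply/Edist => //; move: (Hdist i Hi) => /sat_fbigand; apply.
- by move=> i Hi; apply/Ephi => //; apply: Hsat.
- by move=> i Hi; apply/sat_fbigand => j Hj; apply/Edist => //; apply: Hdist.
Qed.

Lemma chi_consistent (c : nat -> nat -> M) :
  ~ finitely_many n (fun x => forall k, sat (penv n x (c k)) phi) ->
  exists X, forall k, sat (penv (K * n) X (c k)) chi.
Proof.
move/not_finitely_many_distinct/(_ K) => [xs [Hsat Hdist]].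
pose X v := xs (v %/ n) (v %% n).
have EX i : agree n (block n X i) (xs i).
  by move=> l Hl; rewrite /block /X divnMDl ?divn_small ?addn0 ?modnMDl ?modn_small //; lia.
exists X => k; apply/sat_chi; split=> [i Hi|i j Hi Hj Hag].
  move: (Hsat i Hi k); apply: eq_sat_imp => v /Hphi Hv; rewrite /penv.
  by case: ifP => // Hvn; rewrite EX.
by apply: (Hdist i j Hi Hj) => l Hl; rewrite -!EX //; apply: Hag.
Qed.

Lemma chi_inconsistent (c1 c2 : nat -> M) (l : seq (nat -> M)) :
  (forall x, sat (penv n x c1) phi /\ sat (penv n x c2) phi ->
     exists x', List.In x' l /\ agree n x x') ->
  size l < K ->
  ~ exists X, sat (penv (K * n) X c1) chi /\ sat (penv (K * n) X c2) chi.
Proof.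
move=> Hcover HK [X [/sat_chi [H1 Hdist] /sat_chi [H2 _]]].
have Hcover' i : i < K -> exists x, List.In x l /\ agree n (block n X i) x.
  by move=> Hi; apply: Hcover; split; [apply: H1 | apply: H2].
have [i [j [Hi Hj Hag]]] := pigeonhole_agree HK Hcover'.
exact: (Hdist i j Hi Hj Hag).
Qed.

End Distinct.

Theorem proposition3p1 (L : signature) (M : structure L) (HM : aleph1_saturated M)
  (n m : nat) (phi : formula L) (Hphi : fv_bound phi (n + m))
  (a : seq bool -> nat -> M) (Ha : strongly_indiscernible m a)
  (Hinf : ~ finitely_many n
            (fun x : nat -> M => forall k : nat, sat (penv n x (a (nseq k false))) phi))
  (Hfin : finitely_many n
            (fun x : nat -> M => sat (penv n x (a [:: false])) phi /\
                                 sat (penv n x (a [:: true])) phi)) :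
  has_SOP2 M.
Proof.
have [l Hl] := Hfin.
pose K := (size l).+1.
have Hchi := fv_chi (K := K) Hphi.
exists (K * n), m, (chi n m K phi); split=> //; exists a; split.
- exact: consistent_all_branches Hchi Ha (chi_consistent K Hphi Hinf).
- exact: inconsistent_incomparable Hchi Ha (chi_inconsistent Hphi Hl (ltnSn _)).
Qed.
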